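(* Let $\mu>0$, $\delta>0$, let $\gamma$ be a density matrix on $\mathbb{C}^\Lambda$ ($0\le\gamma\le1$) with density $\rho(x)=\gamma_{x,x}$, and let $\Omega=\{x\in\Lambda:\rho(x)<\delta\}$, $\Omega^c=\Lambda\setminus\Omega$. Then $$\mathrm{Tr}\{K_\mu\gamma\}\ \ge\ \mathrm{Tr}\{[P_\Omega^\perp K_\mu P_\Omega^\perp]_-\}-4d\,\delta^{1/2}\,|\partial\Omega|-\mu\sum_{x\in\Omega}\rho(x).$$
   Context: $\Lambda=\mathbb{Z}_L^d$ periodic lattice; $T_{x,y}=1$ if $|x-y|_1=1$, else $0$; $\Delta_{x,y}=T_{x,y}-2d\delta_{x,y}$; $K_\mu=-\Delta-\mu$; $[X]_-=\min\{X,0\}$ (so $\mathrm{Tr}[X]_-$ is the sum of negative eigenvalues). For $A\subseteq\Lambda$, $P_A$ is the orthogonal projection on $\mathbb{C}^\Lambda$ given by $(P_Af)(x)=f(x)$ for $x\in A$ and $0$ otherwise; $P_\Omega^\perp=1-P_\Omega=P_{\Omega^c}$. The boundary is $\partial\Omega=\{x\in\Omega:\mathrm{dist}_1(x,\Omega^c)=1\}$, where $\mathrm{dist}_1$ is the graph ($\ell^1$) distance on $\Lambda$; $|\partial\Omega|$ is its cardinality. *)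

(* Complex scalars: an arbitrary numClosedFieldType C
   (e.g. the complex numbers). *)
From HB Require Import structures.
From mathcomp Require Import all_boot all_order all_algebra.
Local Open Scope sesquilinear_scope.
Set Implicit Arguments. Unset Strict Implicit. Unset Printing Implicit Defensive.
Import Order.TTheory GRing.Theory Num.Theory.
Local Open Scope ring_scope.

(* The periodic lattice Lambda = (Z_L)^d. *)
Definition lattice (d L : nat) : finType := {ffun 'I_d -> 'I_L}.

Definition cdist (L : nat) (a b : 'I_L) : nat :=
  let k := (if (a <= b)%N then (b - a) else (a - b))%N in minn k (L - k).

Definition dist1 (d L : nat) (x y : lattice d L) : nat :=
  (\sum_(i < d) cdist (x i) (y i))%N.

Section Ops.
Variables (C : numClosedFieldType) (d L : nat).
Local Notation Lam := (lattice d L).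
Local Notation N := #|{: Lam}|.

Definition Tmx : 'M[C]_N :=
  \matrix_(i, j) (dist1 (enum_val i) (enum_val j) == 1%N)%:R.

Definition Lap : 'M[C]_N := Tmx - (2 * d)%:R%:M.

Definition Kmu (mu : C) : 'M[C]_N := - Lap - mu%:M.

Definition Pset (A : {set Lam}) : 'M[C]_N :=
  diag_mx (\row_i (enum_val i \in A)%:R).

Definition trneg (X : 'M[C]_N) : C :=
  \sum_i Num.min (spectral_diag X 0 i) 0.

Definition psd (A : 'M[C]_N) : Prop :=
  A \is hermsymmx /\ forall v : 'rV[C]_N, 0 <= (v *m A *m v ^t*) 0 0.

Definition density_matrix (g : 'M[C]_N) : Prop := psd g /\ psd (1%:M - g).

Definition dens (g : 'M[C]_N) (x : Lam) : C := g (enum_rank x) (enum_rank x).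

Definition bdry (O : {set Lam}) : {set Lam} :=
  [set x in O | [exists y, (y \notin O) && (dist1 x y == 1%N)]].

End Ops.

From HB Require Import structures.
From mathcomp Require Import all_boot all_order all_algebra ring zify.
Local Open Scope sesquilinear_scope.
Import Order.TTheory GRing.Theory Num.Theory.

Set Implicit Arguments.
Unset Strict Implicit.
Unset Printing Implicit Defensive.

(* Write [K_mu = (2d - mu) - T] with [T] the adjacency matrix of the lattice and
   split [Tr (K_mu gamma)] into the part of [K_mu] compressed to [Omega^c] and the
   entries touching [Omega]. Since [0 <= gamma <= 1], the compressed part is at
   least [Tr [P K_mu P]_-]. The rest is [(2d - mu) sum_Omega rho] minus the hopping
   terms [gamma_xy] with [x ~ y] and [x] or [y] in [Omega]. Positivity of [gamma]
   gives [2 |gamma_xy| <= rho x + rho y], and [|gamma_xy| <= sqrt delta] when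
   [x \in Omega]; charging every hopping term to its endpoints bounds their sum by
   [2d sum_Omega rho + 4d sqrt(delta) |bdry Omega|]. *)

Lemma cdistC L (a b : 'I_L) : cdist a b = cdist b a.
Proof. by rewrite /cdist; case: ifP; case: ifP => //=; lia. Qed.

Lemma dist1C d L (x y : lattice d L) : dist1 x y = dist1 y x.
Proof. by apply: eq_bigr => k _; rewrite cdistC. Qed.

Lemma cdist_eq0 L (a b : 'I_L) : cdist a b = 0 -> a = b.
Proof.
rewrite /cdist => ab0; apply/val_inj; move: (ltn_ord a) (ltn_ord b) ab0.
by case: ifP => /=; lia.
Qed.

Lemma cdist_eq1 L (a b : 'I_L) : cdist a b = 1 ->
  val b = (a + 1) %% L \/ val b = (a + L - 1) %% L.
Proof.
case: a b => [a aL] [b bL]; rewrite /cdist /=.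
have -> : (a + 1) %% L = if a + 1 < L then a + 1 else 0.
  case: ifP => aS; first by rewrite modn_small.
  have -> : a + 1 = L by lia.
  by rewrite modnn.
have -> : (a + L - 1) %% L = if a == 0 then L - 1 else a - 1.
  case: eqP => [->|a0]; first by rewrite add0n modn_small //; lia.
  have -> : a + L - 1 = (a - 1) + L by lia.
  by rewrite modnDr modn_small //; lia.
by case: ifP; case: ifP; case: eqP => /=; lia.
Qed.

Lemma dist1_eq1 d L (x y : lattice d L) : dist1 x y = 1 ->
  exists k, cdist (x k) (y k) = 1 /\ forall k', k' != k -> y k' = x k'.
Proof.
rewrite /dist1 => xy1.
have [k /= xyk|xy0] := pickP (fun k => cdist (x k) (y k) != 0); last first.
  by move: xy1; rewrite big1 // => k _; apply/eqP/negbFE/xy0.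
exists k; move: xy1 xyk; rewrite (bigD1 k) //= => xy1 xyk.
move: xy1; set rest := bigop _ _ _ => xy1.
have /eqP : rest = 0 by lia.
rewrite sum_nat_eq0 => /forallP xy_eq; split; first lia.
move=> k' k'k.
by apply/esym/cdist_eq0/eqP; move: (xy_eq k'); rewrite k'k.
Qed.

Lemma card_axis_neighbours d L (x : lattice d L) k :
  #|[set y : lattice d L | (cdist (x k) (y k) == 1) &&
      [forall k', (k' != k) ==> (y k' == x k')]]| <= 2.
Proof.
rewrite -card_bool.
apply: (@leq_card_in _ _ (fun y : lattice d L => val (y k) == (x k + 1) %% L)).
move=> y1 y2; rewrite !inE => /andP[/eqP y1k /forallP y1o] /andP[/eqP y2k /forallP y2o].
move=> same_side; apply/ffunP => k'; have [->|k'k] := eqVneq k' k; last first.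
  by move: (y1o k') (y2o k'); rewrite k'k => /eqP -> /eqP ->.
apply/val_inj; move: same_side.
by case: (cdist_eq1 y1k) => ->; case: (cdist_eq1 y2k) => ->; rewrite ?eqxx //; case: eqP.
Qed.

Lemma card_neighbours d L (x : lattice d L) :
  #|[set y | dist1 x y == 1]| <= 2 * d.
Proof.
pose axis k := [set y : lattice d L | (cdist (x k) (y k) == 1) &&
      [forall k', (k' != k) ==> (y k' == x k')]].
apply: (@leq_trans (\sum_(k < d) #|axis k|)); last first.
  rewrite mulnC -[d in d * 2]card_ord -sum_nat_const.
  by apply: leq_sum => k _; apply: card_axis_neighbours.
rewrite -sum1_card big_mkcond; under [X in _ <= X]eq_bigr do rewrite -sum1_card big_mkcond.
rewrite exchange_big /=; apply: leq_sum => y _; case: ifP => //.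
rewrite inE => /eqP /dist1_eq1 [k [xyk yk']].
rewrite (bigD1 k) //= inE xyk eqxx /=.
by rewrite (_ : [forall _, _] = true) //; apply/forallP => k'; apply/implyP => /yk' ->.
Qed.

Local Open Scope ring_scope.

Section PsdMatrices.
Variables (C : numClosedFieldType) (n : nat).
Implicit Types (A g : 'M[C]_n) (v : 'rV[C]_n).

Definition psd_form A := forall v, 0 <= (v *m A *m v ^t*) 0 0.

Lemma hermsymmxP A : reflect (forall i j, A j i = (A i j)^*) (A \is hermsymmx).
Proof.
rewrite is_hermitianmxE; apply: (iffP eqP) => [AE i j|AE].
  by rewrite {1}AE !mxE expr0 mul1r.
by apply/matrixP => i j; rewrite !mxE expr0 mul1r AE.
Qed.

Lemma form_mxE A v :
  (v *m A *m v ^t*) 0 0 = \sum_k \sum_l v 0 k * A k l * (v 0 l)^*.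
Proof.
rewrite mxE exchange_big; apply: eq_bigr => l _.
by rewrite !mxE mulr_suml; apply: eq_bigr => k _.
Qed.

Lemma sum_mul_delta (F : 'I_n -> C) i : \sum_l F l * (l == i)%:R = F i.
Proof.
rewrite (bigD1 i) //= eqxx mulr1 big1 ?addr0 // => l /negbTE ->.
by rewrite mulr0.
Qed.

Lemma form_two_pointE A i j (a b : C) :
  let v := \row_k (a * (k == i)%:R + b * (k == j)%:R) in
  (v *m A *m v ^t*) 0 0 =
    a * (A i i * a^* + A i j * b^*) + b * (A j i * a^* + A j j * b^*).
Proof.
move=> v; rewrite form_mxE.
have inner k (c : C) :
    \sum_l c * A k l * (v 0 l)^* = c * (A k i * a^* + A k j * b^*).
  under eq_bigr do rewrite mxE rmorphD !rmorphM /= !conjC_nat mulrDr !mulrA.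
  by rewrite big_split /= !sum_mul_delta mulrDr !mulrA.
under eq_bigr do rewrite inner mxE mulrDl ![_ * (_ == _)%:R]mulrC -!mulrA.
rewrite big_split /= ![\sum_k (k == _)%:R * _](eq_bigr _ (fun k _ => mulrC _ _)).
by rewrite !sum_mul_delta.
Qed.

Lemma psd_diag_ge0 A i : psd_form A -> 0 <= A i i.
Proof.
move/(_ (\row_k (1 * (k == i)%:R + 0 * (k == i)%:R))).
by rewrite form_two_pointE conjC1 conjC0 !mulr0 !mul0r !addr0 mul1r mulr1.
Qed.

Lemma psd_diag_le1 A i : psd_form (1%:M - A) -> A i i <= 1.
Proof. by move/(psd_diag_ge0 i); rewrite !mxE eqxx mulr1n subr_ge0. Qed.

(* Positivity on [e_i - (t x / |x|) e_j], with [x = A i j]. *)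
Lemma psd_norm_entry_le A i j (t : C) : A \is hermsymmx -> psd_form A ->
  0 < t -> t *+ 2 * `|A i j| <= A i i + t ^+ 2 * A j j.
Proof.
move=> /hermsymmxP Aherm Apsd t_gt0.
have [x0|x_neq0] := eqVneq (A i j) 0.
  rewrite x0 normr0 mulr0 addr_ge0 ?psd_diag_ge0 //.
  by rewrite mulr_ge0 ?psd_diag_ge0 // exprn_ge0 // ltW.
set x := A i j; set m := `|x|.
have m_neq0 : m != 0 by rewrite normr_eq0.
have tc : t^* = t by apply/CrealP/gtr0_real.
have mc : m^* = m by apply/CrealP/normr_real.
have xc : x^* = m ^+ 2 / x by rewrite /m normCK [x * _]mulrC mulfK.
move: (Apsd (\row_k (1 * (k == i)%:R + (- (t * x / m)) * (k == j)%:R))).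
rewrite form_two_pointE (Aherm i j) -/x !rmorphN !rmorphM /= !rmorphV ?unitfE //=.
rewrite tc mc xc conjC1.
have -> : 1 * (A i i * 1 + x * - (t * (m ^+ 2 / x) / m)) +
    - (t * x / m) * (m ^+ 2 / x * 1 + A j j * - (t * (m ^+ 2 / x) / m))
    = A i i + t ^+ 2 * A j j - t *+ 2 * m.
  by field; rewrite m_neq0 x_neq0.
by rewrite subr_ge0.
Qed.

Lemma psd_form_conj (P g : 'M[C]_n) : psd_form g -> psd_form (P *m g *m P ^t*).
Proof.
move=> gpsd v; have := gpsd (v *m P).
by rewrite trmx_mul map_mxM !mulmxA.
Qed.

Lemma real_minr0_le_mulr (x c : C) : x \is Num.real -> 0 <= c -> c <= 1 ->
  Num.min x 0 <= x * c.
Proof.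
move=> /orP[x_ge0|x_le0] c_ge0 c_le1; first by rewrite min_r // mulr_ge0.
rewrite min_l // -subr_ge0 -[X in _ - X]mulr1 -mulrBr -mulrNN.
by rewrite mulr_ge0 ?oppr_ge0 ?subr_le0.
Qed.

(* In an eigenbasis of [A], [tr (A g) = sum_i lambda_i g'_ii] with
   [0 <= g'_ii <= 1]. *)
Lemma sum_min_spectral_le_trace A g :
  A \is hermsymmx -> psd_form g -> psd_form (1%:M - g) ->
  \sum_i Num.min (spectral_diag A 0 i) 0 <= \tr (A *m g).
Proof.
move=> Aherm g_ge0 g_le1.
set P := spectralmx A; set D := spectral_diag A.
have Punit : P \is unitarymx := spectral_unitarymx A.
have AE : A = P ^t* *m diag_mx D *m P.
  by rewrite -invmx_unitary //; apply/orthomx_spectralP/hermitian_normalmx.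
have Dreal : D \is a realmx := hermitian_spectral_diag_real Aherm.
have -> : \tr (A *m g) = \sum_i D 0 i * (P *m g *m P ^t*) i i.
  rewrite AE -!mulmxA mxtrace_mulC -!mulmxA mul_diag_mx.
  by apply: eq_bigr => i _; rewrite mxE !mulmxA.
have g'_le1 : psd_form (1%:M - P *m g *m P ^t*).
  have := psd_form_conj P g_le1.
  by rewrite mulmxBr mulmxBl mulmx1 (unitarymxP Punit).
apply: ler_sum => i _; apply: real_minr0_le_mulr.
- exact: (mxOverP Dreal).
- exact/psd_diag_ge0/psd_form_conj.
- exact: psd_diag_le1.
Qed.

End PsdMatrices.

Section Compression.
Variables (C : numClosedFieldType) (n : nat).

Definition indicator_mx (p : pred 'I_n) : 'M[C]_n := diag_mx (\row_i (p i)%:R).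

Definition adjacency_mx (adj : rel 'I_n) : 'M[C]_n := \matrix_(i, j) (adj i j)%:R.

Lemma compress_hermsymmx (p : pred 'I_n) (A : 'M[C]_n) : A \is hermsymmx ->
  indicator_mx p *m A *m indicator_mx p \is hermsymmx.
Proof.
move=> /hermsymmxP Aherm; apply/hermsymmxP => i j.
rewrite mul_mx_diag mul_diag_mx !mxE Aherm !rmorphM /= !conjC_nat; ring.
Qed.

Lemma scalar_subr_adj_hermsymmx (c : C) (adj : rel 'I_n) :
  c \is Num.real -> symmetric adj -> c%:M - adjacency_mx adj \is hermsymmx.
Proof.
move=> /CrealP c_real adjC; apply/hermsymmxP => i j.
by rewrite !mxE rmorphB /= rmorphMn conjC_nat /= c_real eq_sym adjC.
Qed.

Variable om : pred 'I_n.

Lemma mxtrace_mulE (X g : 'M[C]_n) : \tr (X *m g) = \sum_i \sum_j X i j * g j i.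
Proof. by apply: eq_bigr => i _; rewrite mxE. Qed.

Lemma mxtrace_mul_compress (X g : 'M[C]_n) :
  let P := indicator_mx (predC om) in
  \tr (X *m g) = \tr (P *m X *m P *m g) + \sum_i \sum_j (om i || om j)%:R * X i j * g j i.
Proof.
rewrite /= !mxtrace_mulE -big_split; apply: eq_bigr => i _.
rewrite -big_split; apply: eq_bigr => j _.
rewrite mul_mx_diag mul_diag_mx !mxE /=.
by case: (om i); case: (om j); rewrite /=; ring.
Qed.

Lemma compress_defect_scalar_subr_adj (c : C) (adj : rel 'I_n) (g : 'M[C]_n) :
  \sum_i \sum_j (om i || om j)%:R * (c%:M - adjacency_mx adj) i j * g j i =
  c * \sum_i (om i)%:R * g i i - \sum_i \sum_j ((om i || om j) && adj i j)%:R * g j i.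
Proof.
rewrite mulr_sumr -sumrB; apply: eq_bigr => i _.
have -> : c * ((om i)%:R * g i i) = \sum_j (om i || om j)%:R * c *+ (i == j) * g j i.
  rewrite (bigD1 i) //= eqxx orbb big1 ?addr0 => [|j]; first by rewrite mulr1n mulrCA mulrA.
  by rewrite eq_sym => /negbTE ->; rewrite mulr0n mul0r.
rewrite -sumrB; apply: eq_bigr => j _; rewrite !mxE.
by case: (om i || om j); case: (adj i j); rewrite /= ?mul1r ?mul0r ?mulr1n ?mulr0n; ring.
Qed.

End Compression.

Section HoppingBound.
Variables (C : numClosedFieldType) (n k : nat) (adj : rel 'I_n) (om : pred 'I_n).
Hypothesis adjC : symmetric adj.
Hypothesis adj_deg : forall i, (#|[set j | adj i j]| <= k)%N.

Lemma sum_adj_le_deg i : \sum_j (adj i j)%:R <= k%:R :> C.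
Proof.
rewrite -natr_sum ler_nat (leq_trans _ (adj_deg i)) //.
rewrite -sum1_card [X in (_ <= X)%N]big_mkcond /=.
by apply: leq_sum => j _; rewrite inE; case: (adj i j).
Qed.

Lemma sum_adj_weights_le (w : 'I_n -> C) : (forall i, 0 <= w i) ->
  \sum_i \sum_j (adj i j)%:R * (w i + w j) <= (\sum_i w i) * k%:R *+ 2.
Proof.
move=> w_ge0; have -> : \sum_i \sum_j (adj i j)%:R * (w i + w j) =
    (\sum_i \sum_j (adj i j)%:R * w i) *+ 2.
  under eq_bigr do (under eq_bigr do rewrite mulrDr; rewrite big_split /=).
  rewrite big_split /= mulr2n; congr (_ + _); rewrite [RHS]exchange_big /=.
  by apply: eq_bigr => i _; apply: eq_bigr => j _; rewrite adjC.
rewrite lerMn2r /= mulr_suml; apply: ler_sum => i _.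
by rewrite -mulr_suml mulrC ler_wpM2l ?sum_adj_le_deg.
Qed.

Definition edge_boundary : {set 'I_n} := [set i | om i && [exists j, ~~ om j && adj i j]].

Variables (g : 'M[C]_n) (s : C).
Hypotheses (g_herm : g \is hermsymmx) (g_psd : psd_form g).
Hypotheses (g_le1 : forall i, g i i <= 1) (s_gt0 : 0 < s).
Hypothesis g_small : forall i, om i -> g i i <= s ^+ 2.

Lemma norm_entry_le_diag i j : `|g i j| *+ 2 <= g i i + g j j.
Proof.
by have := psd_norm_entry_le i j g_herm g_psd ltr01; rewrite mulr_natl expr1n mul1r.
Qed.

Lemma norm_entry_le_small i j : om i -> `|g i j| <= s.
Proof.
move=> omi; rewrite -(ler_pM2l s_gt0) -(ler_pMn2r (isT : (0 < 2)%N)) -mulrnAl.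
apply: le_trans (psd_norm_entry_le i j g_herm g_psd s_gt0) _.
rewrite -expr2 mulr2n lerD ?g_small //.
by rewrite ler_piMr // exprn_ge0 // ltW.
Qed.

Let w i := (om i)%:R * g i i + (i \in edge_boundary)%:R * s *+ 2.

Let g_ge0 i : 0 <= g i i := psd_diag_ge0 i g_psd.

Let w_ge0 i : 0 <= w i.
Proof. by rewrite /w addr_ge0 ?mulrn_wge0 ?mulr_ge0 ?ler0n ?g_ge0 ?ltW. Qed.

Lemma hop_pair_le i j :
  ((om i || om j) && adj i j)%:R * `|g j i| *+ 2 <= (adj i j)%:R * (w i + w j).
Proof.
have in_bdry l l' : om l -> ~~ om l' -> adj l l' -> l \in edge_boundary.
  by move=> oml oml' adjl; rewrite inE oml; apply/existsP; exists l'; rewrite oml'.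
have w_ge_diag l : om l -> g l l <= w l.
  by move=> oml; rewrite /w oml mul1r lerDl mulrn_wge0 // mulr_ge0 // ltW.
have w_ge_s l : l \in edge_boundary -> s *+ 2 <= w l.
  by move=> bl; rewrite /w bl mul1r lerDr mulr_ge0.
case adj_ij : (adj i j); last by rewrite andbF !mul0r mul0rn.
rewrite andbT mul1r.
have [omi|omi] := boolP (om i); have [omj|omj] := boolP (om j);
  rewrite /= ?mul1r ?mul0r ?mul0rn.
- by rewrite (le_trans (norm_entry_le_diag j i)) // addrC lerD ?w_ge_diag.
- rewrite (hermsymmxP _ g_herm i j) norm_conjC.
  apply: le_trans (_ : s *+ 2 <= _); first by rewrite lerMn2r norm_entry_le_small.
  by rewrite (le_trans (w_ge_s _ (in_bdry _ _ omi omj adj_ij))) // lerDl.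
- apply: le_trans (_ : s *+ 2 <= _); first by rewrite lerMn2r norm_entry_le_small.
  by rewrite (le_trans (w_ge_s j (in_bdry _ i _ _ _))) ?lerDr // adjC.
- exact: addr_ge0.
Qed.

Lemma hop_sum_real : \sum_i \sum_j ((om i || om j) && adj i j)%:R * g j i \is Num.real.
Proof.
apply/CrealP; rewrite rmorph_sum exchange_big /=; apply: eq_bigr => j _.
rewrite rmorph_sum; apply: eq_bigr => i _.
by rewrite rmorphM /= conjC_nat -(hermsymmxP _ g_herm) orbC adjC.
Qed.

Lemma hop_sum_le : \sum_i \sum_j ((om i || om j) && adj i j)%:R * g j i <=
  k%:R * \sum_i (om i)%:R * g i i + (2 * k)%:R * s * #|edge_boundary|%:R.
Proof.
have card_sum : \sum_i (i \in edge_boundary)%:R = #|edge_boundary|%:R :> C.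
  rewrite -natr_sum -sum1_card [in RHS]big_mkcond /=.
  by congr _%:R; apply: eq_bigr => i _; case: (i \in _).
have w_sum : \sum_i w i = \sum_i (om i)%:R * g i i + #|edge_boundary|%:R * s *+ 2.
  by rewrite big_split /= sumrMnl -mulr_suml card_sum.
apply: le_trans (real_ler_norm hop_sum_real) _.
rewrite -(ler_pMn2r (isT : (0 < 2)%N)).
apply: le_trans (_ : (\sum_i \sum_j ((om i || om j) && adj i j)%:R * `|g j i|) *+ 2 <= _).
  rewrite lerMn2r /=; apply: le_trans (ler_norm_sum _ _ _) _; apply: ler_sum => i _.
  apply: le_trans (ler_norm_sum _ _ _) _; apply: ler_sum => j _.
  by rewrite normrM normr_nat.
apply: le_trans (_ : \sum_i \sum_j (adj i j)%:R * (w i + w j) <= _).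
  rewrite -sumrMnl; apply: ler_sum => i _.
  by rewrite -sumrMnl; apply: ler_sum => j _; apply: hop_pair_le.
apply: le_trans (sum_adj_weights_le w_ge0) _.
by rewrite w_sum le_eqVlt; apply/orP; left; apply/eqP; ring.
Qed.

End HoppingBound.

Section Lattice.
Variables (C : numClosedFieldType) (d L : nat).
Local Notation Lam := (lattice d L).
Local Notation N := #|{: Lam}|.

Definition lattice_adj : rel 'I_N := fun i j => dist1 (enum_val i) (enum_val j) == 1%N.

Lemma lattice_adjC : symmetric lattice_adj.
Proof. by move=> i j; rewrite /lattice_adj dist1C. Qed.

Lemma lattice_adj_deg i : (#|[set j | lattice_adj i j]| <= 2 * d)%N.
Proof.
rewrite -(card_imset _ enum_val_inj); apply: leq_trans (card_neighbours (enum_val i)).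
by apply/subset_leq_card/subsetP => y /imsetP[j]; rewrite !inE => adj_ij ->.
Qed.

Lemma Kmu_adjacency (mu : C) : Kmu d L mu = ((2 * d)%:R - mu)%:M - adjacency_mx C lattice_adj.
Proof. by rewrite /Kmu /Lap opprB addrAC raddfB. Qed.

Lemma Pset_setC (A : {set Lam}) :
  Pset C (~: A) = indicator_mx C (predC [pred i | enum_val i \in A]).
Proof. by congr diag_mx; apply/rowP => i; rewrite !mxE inE. Qed.

Lemma sum_dens (g : 'M[C]_N) (A : {set Lam}) :
  \sum_(x in A) dens g x = \sum_i (enum_val i \in A)%:R * g i i.
Proof.
rewrite (eq_bigr (fun i => (enum_val i \in A)%:R * dens g (enum_val i))); last first.
  by move=> i _; rewrite /dens enum_valK.
rewrite -(big_enum_val (A := Lam) (fun x => (x \in A)%:R * dens g x)) big_mkcond /=.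
by apply: eq_bigr => x _; case: (x \in A); rewrite ?mul1r ?mul0r.
Qed.

Lemma card_bdry (A : {set Lam}) :
  #|bdry A| = #|edge_boundary lattice_adj [pred i | enum_val i \in A]|.
Proof.
rewrite -(on_card_preimset (onW_bij _ (@enum_val_bij Lam))).
apply: eq_card => i; rewrite !inE; congr (_ && _).
apply/existsP/existsP => [[y /andP[yA xy]]|[j /andP[jA adj_ij]]].
  by exists (enum_rank y); rewrite /lattice_adj /= (enum_rankK y) xy andbT.
by exists (enum_val j); rewrite jA.
Qed.

End Lattice.

Theorem lemma3p1 (C : numClosedFieldType) (d L : nat) (mu delta : C)
  (g : 'M[C]_#|{: lattice d L}|) :
  0 < mu -> 0 < delta -> density_matrix g ->
  let Omega := [set x : lattice d L | dens g x < delta] in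
  \tr (@Kmu C d L mu *m g) >=
    trneg (@Pset C d L (~: Omega) *m @Kmu C d L mu *m @Pset C d L (~: Omega))
    - 4%:R * d%:R * sqrtC delta * (#|bdry Omega|)%:R
    - mu * \sum_(x in Omega) dens g x.
Proof.
move=> mu_gt0 delta_gt0 [[g_herm g_psd] [_ g_le1]]; rewrite [is_true _]/=.
set Omega := [set x | _ < delta].
rewrite Kmu_adjacency Pset_setC sum_dens card_bdry.
set om := [pred i | enum_val i \in Omega].
set c := (2 * d)%:R - mu.
set K := c%:M - _.
have K_herm : K \is hermsymmx.
  by apply: scalar_subr_adj_hermsymmx (@lattice_adjC d L); rewrite rpredB ?realn ?gtr0_real.
have s_gt0 : 0 < sqrtC delta by rewrite sqrtC_gt0.
have g_small i : om i -> g i i <= sqrtC delta ^+ 2.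
  by rewrite sqrtCK /om /= inE /dens enum_valK => /ltW.
rewrite (mxtrace_mul_compress om) compress_defect_scalar_subr_adj -addrA lerD //.
  exact: sum_min_spectral_le_trace (compress_hermsymmx _ K_herm) g_psd g_le1.
have := hop_sum_le (@lattice_adjC d L) (@lattice_adj_deg d L) g_herm g_psd
  (fun i => psd_diag_le1 i g_le1) s_gt0 g_small.
have -> : \sum_i (enum_val i \in Omega)%:R * g i i = \sum_i (om i)%:R * g i i by [].
set S := \sum_i \sum_j _; set D := \sum_i (om i)%:R * _; set B := #|_|%:R => hop_le.
rewrite [X in X <= _](_ : _ = c * D - ((2 * d)%:R * D + (2 * (2 * d))%:R * sqrtC delta * B)).
  by rewrite lerD2l lerN2.
by rewrite /c; ring.
Qed.
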